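(* Let $(t_1,h_1),(t_2,h_2)\in\mathbb R\times\mathbb R^+$ with $t_2\le t_1$, and suppose the curves $t\mapsto((t-t_1)^2+h_1^2)^{1/2}$ and $t\mapsto((t-t_2)^2+h_2^2)^{1/2}$ intersect at $(0,\hat h_0)$, $\hat h_0>0$. For $t\ge0$ let $\hat h_t=((t-t_1)^2+h_1^2)^{1/2}$ and $U^s_r=\{(x,y):y>0,(x-s)^2+y^2<r^2\}$. Then the collection of sets $\{U^t_{\hat h_t}\setminus U^0_{\hat h_0}\}_{t\ge0}$ is increasing in $t$. *)

From Stdlib Require Import Reals.
Open Scope R_scope.

Definition U (s r : R) (p : R * R) : Prop :=
  0 < snd p /\ (fst p - s) ^ 2 + (snd p) ^ 2 < r ^ 2.

Definition hhat (t1 h1 t : R) : R := sqrt ((t - t1) ^ 2 + h1 ^ 2).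

(* The power of a point p = (x, y) with respect to the circle of centre (t, 0) and
   radius hhat t is affine in t:
     (x - t)^2 + y^2 - hhat_t^2 = (x^2 + y^2 - hhat_0^2) - 2 t (x - t1).
   Outside U^0_{hhat_0} the constant term is nonnegative, so if the power is negative
   at some s >= 0 the slope must be negative, and it stays negative for all t >= s. *)
From Stdlib Require Import Reals Lra Psatz.
Open Scope R_scope.

Lemma hhat_sqr (t1 h1 t : R) : hhat t1 h1 t ^ 2 = (t - t1) ^ 2 + h1 ^ 2.
Proof.
  unfold hhat; apply pow2_sqrt.
  apply Rplus_le_le_0_compat; apply pow2_ge_0.
Qed.

Lemma U_hhat_iff (t1 h1 t : R) (p : R * R) :
  U t (hhat t1 h1 t) p <->
  0 < snd p /\
  (fst p ^ 2 + snd p ^ 2 - hhat t1 h1 0 ^ 2) - t * (2 * (fst p - t1)) < 0.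
Proof.
  unfold U; rewrite !hhat_sqr.
  split; intros [Hy Hlt]; split; try exact Hy; nra.
Qed.

Lemma not_U0_ge (r : R) (p : R * R) :
  0 < snd p -> ~ U 0 r p -> r ^ 2 <= fst p ^ 2 + snd p ^ 2.
Proof.
  intros Hy Hout.
  destruct (Rlt_or_le (fst p ^ 2 + snd p ^ 2) (r ^ 2)) as [Hlt | Hle]; [| exact Hle].
  exfalso; apply Hout; split; [exact Hy |].
  now replace (fst p - 0) with (fst p) by ring.
Qed.

Lemma affine_neg_mono (a b s t : R) :
  0 <= a -> 0 <= s -> s <= t -> a - s * b < 0 -> a - t * b < 0.
Proof.
  intros Ha Hs Hst Hneg.
  assert (Hb : 0 < b).
  { destruct (Rlt_or_le 0 b) as [Hb | Hb]; [exact Hb |].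
    assert (s * b <= 0) by nra; lra. }
  assert (s * b <= t * b) by (apply Rmult_le_compat_r; lra); lra.
Qed.

Theorem lemma5p13 (t1 h1 t2 h2 h0 : R)
  (Hh1 : 0 < h1) (Hh2 : 0 < h2) (Ht : t2 <= t1)
  (Hh0 : 0 < h0)
  (Hc1 : sqrt ((0 - t1) ^ 2 + h1 ^ 2) = h0)
  (Hc2 : sqrt ((0 - t2) ^ 2 + h2 ^ 2) = h0) :
  forall s t : R, 0 <= s -> s <= t ->
  forall p : R * R,
    (U s (hhat t1 h1 s) p /\ ~ U 0 h0 p) ->
    (U t (hhat t1 h1 t) p /\ ~ U 0 h0 p).
Proof.
  intros s t Hs Hst p [Hin Hout]; split; [| exact Hout].
  assert (Hh0_hat : hhat t1 h1 0 = h0) by exact Hc1.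
  apply U_hhat_iff in Hin as [Hy Hneg].
  apply U_hhat_iff; split; [exact Hy |].
  apply (affine_neg_mono _ _ s t); [| exact Hs | exact Hst | exact Hneg].
  rewrite Hh0_hat.
  pose proof (not_U0_ge h0 p Hy Hout); lra.
Qed.
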